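(* Let $W_\Gamma$ be a graph product on a finite graph $\Gamma=(V,E)$ with every vertex group primary or infinite cyclic, and assume no vertex $v\in V$ satisfies $st(v)=V$. Suppose $V=V_1\sqcup V_2$ with $V_1,V_2$ non-empty and the natural map $W_{\Gamma_{V_1}}\times W_{\Gamma_{V_2}}\to W_\Gamma$ is an isomorphism. Then both $V_1$ and $V_2$ are lower cones with respect to $\le_\tau$.
   Context: Graph: $\Gamma=(V,E)$, $V$ non-empty finite, $E$ a set of 2-element subsets; $lk(v)=\{x:\{v,x\}\in E\}$, $st(v)=lk(v)\cup\{v\}$; $W_{\Gamma_X}$ the subgroup generated by $G_v$, $v\in X$ (the graph product on the full subgraph spanned by $X$). A group is primary if cyclic of order $p^k$, $p$ prime, $k\ge1$. Relation $\le_\tau$ on $V$: $v\le_\tau v$; for $v\neq w$, $v\le_\tau w$ iff either (a) $|G_v|=\infty$ and $lk(v)\subset st(w)$, or (b) $|G_v|=p^k$, $|G_w|=p^\ell$ for the same prime $p$ and $st(v)\subset st(w)$. $X\subset V$ is a lower cone if $t\in X$, $s\in V$, $s\le_\tau t$ imply $s\in X$. *)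

From mathcomp Require Import all_boot all_order all_algebra.
Set Implicit Arguments. Unset Strict Implicit. Unset Printing Implicit Defensive.

(* Vertex groups are cyclic: the vertex
   group G_v is Z/(ord v) when ord v > 0 and Z (infinite cyclic) when
   ord v = 0.  *)

Section GraphProduct.
Variables (V : finType) (adj : rel V) (ord : V -> nat).

Definition simple_graph : Prop :=
  (forall x y, adj x y = adj y x) /\ (forall x, ~~ adj x x).

Definition lk (v : V) : {set V} := [set x | adj v x].
Definition st (v : V) : {set V} := v |: lk v.

Definition primary_order (n : nat) : Prop :=
  exists p k, prime p /\ (0 < k)%N /\ n = (p ^ k)%N.

Definition primary_or_Z : Prop :=
  forall v, ord v = 0%N \/ primary_order (ord v).

(* Words in the generators of the graph product: a letter (v, z) denotes the
   element z (i.e. the z-th power of the canonical generator) of G_v. *)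
Definition letter := (V * int)%type.
Definition word := seq letter.

Local Open Scope ring_scope.

Inductive wrel : word -> word -> Prop :=
| wrel_mul v (a b : int) : wrel [:: (v, a); (v, b)] [:: (v, a + b)]
| wrel_triv v (a : int) : ((ord v)%:Z %| a)%Z -> wrel [:: (v, a)] [::]
| wrel_comm v w (a b : int) : adj v w -> wrel [:: (v, a); (w, b)] [:: (w, b); (v, a)].

Inductive weq : word -> word -> Prop :=
| weq_refl w : weq w w
| weq_sym w1 w2 : weq w1 w2 -> weq w2 w1
| weq_trans w1 w2 w3 : weq w1 w2 -> weq w2 w3 -> weq w1 w3
| weq_ctx u x y w : wrel x y -> weq (u ++ x ++ w) (u ++ y ++ w).

(* Words representing elements of the subgroup W_{Gamma_X} generated by the
   G_v, v in X. *)
Definition word_in (X : {set V}) (w : word) : bool := all (fun l => l.1 \in X) w.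

(* The natural map W_{Gamma_X1} x W_{Gamma_X2} -> W_Gamma, (a, b) |-> a b,
   is an isomorphism of groups: a homomorphism, injective and surjective. *)
Definition natural_map_iso (X1 X2 : {set V}) : Prop :=
  [/\ (forall a a' b b', word_in X1 a -> word_in X1 a' ->
         word_in X2 b -> word_in X2 b' ->
         weq ((a ++ a') ++ (b ++ b')) ((a ++ b) ++ (a' ++ b'))),
      (forall a a' b b', word_in X1 a -> word_in X1 a' ->
         word_in X2 b -> word_in X2 b' ->
         weq (a ++ b) (a' ++ b') -> weq a a' /\ weq b b')
    & (forall w, exists a b, [/\ word_in X1 a, word_in X2 b & weq w (a ++ b)])].

Definition le_tau (v w : V) : Prop :=
  v = w \/
  (v <> w /\
   ((ord v = 0%N /\ lk v \subset st w) \/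
    ((exists p k l, [/\ prime p, (0 < k)%N, (0 < l)%N,
                       ord v = (p ^ k)%N & ord w = (p ^ l)%N])
     /\ st v \subset st w))).

Definition lower_cone (X : {set V}) : Prop :=
  forall t s, t \in X -> le_tau s t -> s \in X.

End GraphProduct.

From mathcomp Require Import all_boot all_order all_algebra.
From mathcomp Require Import zify ring.
Set Implicit Arguments. Unset Strict Implicit. Unset Printing Implicit Defensive.
Import Order.TTheory GRing.Theory Num.Theory.

(* If W_{V1} x W_{V2} -> W_Gamma is a homomorphism, then every
   generator of a vertex group in V1 commutes in W_Gamma with every generator
   of a vertex group in V2.  Conversely, two distinct non-adjacent vertices
   with non-trivial vertex groups have non-commuting generators: W_Gamma acts
   on the integers by letting v1 rotate the window [0, m) and v2 rotate the
   overlapping window [m-1, m-1+n), and these two rotations do not commute.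
   Hence every vertex of V1 is adjacent to every vertex of V2 (Gamma is the
   join of its two halves).  Finally, in such a join, s <=_tau t with t in V1
   and s in V2 would force lk(s) within st(t), so st(t) = V, which is
   excluded; thus both halves are lower cones.
   The file first develops cyclic shifts of integer windows, then the fact
   that any action of the vertex groups satisfying the defining relations is
   an invariant of equality in W_Gamma, then the two-window action, and
   finally the combinatorial argument on joins. *)

Local Open Scope ring_scope.

Definition wrap (c n a i : int) : int :=
  if (c <= i) && (i < c + n) then c + ((i - c + a) %% n)%Z else i.

Section Wrap.
Variables (c n : int).
Hypothesis n_gt0 : 0 < n.

Lemma wrap_add a b i : wrap c n b (wrap c n a i) = wrap c n (a + b) i.
Proof.
rewrite /wrap; have [/andP[ci icn]|out] := boolP ((c <= i) && (i < c + n));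
  last by rewrite !(negbTE out).
have r_ge0 : 0 <= ((i - c + a) %% n)%Z by apply: modz_ge0; lia.
have r_lt := ltz_pmod (i - c + a) n_gt0.
have -> : (c <= c + ((i - c + a) %% n)%Z) && (c + ((i - c + a) %% n)%Z < c + n).
  by apply/andP; split; lia.
by rewrite [c + _ - c]addrC addKr modzDml !addrA.
Qed.

Lemma wrap_dvd a i : (n %| a)%Z -> wrap c n a i = i.
Proof.
move=> /dvdz_mod0P a_mod; rewrite /wrap; case: ifP => [/andP[ci icn]|//].
rewrite -modzDmr a_mod addr0 modz_small; first by ring.
by apply/andP; split; lia.
Qed.

End Wrap.

Lemma wrap_out c n a i : ~~ ((c <= i) && (i < c + n)) -> wrap c n a i = i.
Proof. by rewrite /wrap => /negbTE ->. Qed.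

(* The length of a window on which a cyclic group of order o (o = 0 meaning
   infinite cyclic) can act non-trivially. *)
Definition period (o : nat) : int := if o == 0%N then 2 else o%:Z.

(* A non-trivial vertex group yields a window of length at least 2, so that
   the window really moves its points. *)
Lemma period_ge2 (o : nat) : o != 1%N -> 2 <= period o.
Proof. by move=> o_ne1; rewrite /period; case: eqP => /eqP o_ne0; lia. Qed.

(* The relation g^(ord v) = 1 holds on the window. *)
Lemma period_dvd (o : nat) (a : int) : (o%:Z %| a)%Z -> (period o %| a)%Z.
Proof.
rewrite /period; case: eqP => [->|//].
by rewrite dvd0z => /eqP ->; rewrite dvdz0.
Qed.

Section Representation.
Variables (V : finType) (adj : rel V) (ord : V -> nat) (T : Type).

Variable rep : V -> int -> T -> T.
Hypothesis rep_add : forall v a b x, rep v b (rep v a x) = rep v (a + b) x.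
Hypothesis rep_triv : forall v a x, ((ord v)%:Z %| a)%Z -> rep v a x = x.
Hypothesis rep_comm : forall v w a b x,
  adj v w -> rep w b (rep v a x) = rep v a (rep w b x).

Definition word_act (w : word V) (x : T) : T :=
  foldl (fun y (l : letter V) => rep l.1 l.2 y) x w.

Lemma weq_word_act w1 w2 : weq adj ord w1 w2 -> word_act w1 =1 word_act w2.
Proof.
elim=> [w|u1 u2 _ IH|u1 u2 u3 _ IH12 _ IH23|u x y w r] z //.
- by rewrite IH12 IH23.
- rewrite /word_act !foldl_cat; congr foldl.
  by case: r => /= [v a b|v a /rep_triv ->|v v' a b /rep_comm ->]; rewrite ?rep_add.
Qed.

End Representation.

Section NonadjacentGenerators.
Variables (V : finType) (adj : rel V) (ord : V -> nat) (v1 v2 : V).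
Hypothesis graph : simple_graph adj.
Hypotheses (v1_nt : ord v1 != 1%N) (v2_nt : ord v2 != 1%N).
Hypotheses (v12 : v1 != v2) (v12_nadj : ~~ adj v1 v2).

Let m : int := period (ord v1).
Let n : int := period (ord v2).

(* v1 rotates [0, m), v2 rotates [m - 1, m - 1 + n); the windows share
   exactly the point m - 1, every other vertex acts trivially. *)
Definition two_windows (v : V) (a i : int) : int :=
  if v == v1 then wrap 0 m a i
  else if v == v2 then wrap (m - 1) n a i else i.

(* Adjacent vertices act on disjoint sets of points (or trivially), since
   v1 and v2 themselves are neither equal nor adjacent. *)
Lemma two_windows_comm v w a b i : adj v w ->
  two_windows w b (two_windows v a i) = two_windows v a (two_windows w b i).
Proof.
case: graph => sym irr vw; rewrite /two_windows /=.
have [ev1|nv1] := eqVneq v v1; have [ew1|nw1] := eqVneq w v1 => //=.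
- by move: vw; rewrite ev1 ew1 (negbTE (irr v1)).
- have [ew2|//] := eqVneq w v2.
  by move: vw; rewrite ev1 ew2 (negbTE v12_nadj).
- have [ev2|//] := eqVneq v v2.
  by move: vw; rewrite ev2 ew1 sym (negbTE v12_nadj).
- have [ev2|nv2] := eqVneq v v2; have [ew2|nw2] := eqVneq w v2 => //=.
  by move: vw; rewrite ev2 ew2 (negbTE (irr v2)).
Qed.

Lemma two_windows_respects_weq w1 w2 :
  weq adj ord w1 w2 -> word_act two_windows w1 =1 word_act two_windows w2.
Proof.
have [m_gt0 n_gt0] : 0 < m /\ 0 < n by rewrite !(lt_le_trans _ (period_ge2 _)).
apply: weq_word_act => [v a b i|v a i /period_dvd dvd_a|]; rewrite /two_windows /=.
- case: eqP => _; first exact: wrap_add.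
  by case: eqP => // _; apply: wrap_add.
- case: eqP => [ev1|_]; first by rewrite ev1 in dvd_a; apply: wrap_dvd.
  by case: eqP => [ev2|//]; rewrite ev2 in dvd_a; apply: wrap_dvd.
- exact: two_windows_comm.
Qed.

(* Distinct non-adjacent vertices with non-trivial vertex groups have
   non-commuting generators: starting from m - 1, the word v1 v2 ends at 0
   while v2 v1 ends at m. *)
Lemma nonadjacent_noncommuting :
  ~ weq adj ord [:: (v1, 1); (v2, 1)] [:: (v2, 1); (v1, 1)].
Proof.
move=> /two_windows_respects_weq /(_ (m - 1)).
have m_ge2 : 2 <= m := period_ge2 v1_nt.
have n_ge2 : 2 <= n := period_ge2 v2_nt.
have v21 : (v2 == v1) = false by rewrite eq_sym (negbTE v12).
rewrite /word_act /= /two_windows /= !eqxx ?(negbTE v12) ?v21.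
have -> : wrap 0 m 1 (m - 1) = 0.
  rewrite /wrap ifT; last by apply/andP; split; lia.
  by rewrite subr0 subrK modzz.
have -> : wrap (m - 1) n 1 (m - 1) = m.
  rewrite /wrap ifT; last by apply/andP; split; lia.
  by rewrite subrr add0r modz_small ?subrK //; apply/andP; split; lia.
rewrite wrap_out; last by apply/negP; lia.
rewrite wrap_out; last by apply/negP; lia.
lia.
Qed.

End NonadjacentGenerators.

Section Joins.
Variables (V : finType) (adj : rel V) (ord : V -> nat).
Hypothesis graph : simple_graph adj.

(* If the natural map of a partition is a homomorphism, the partition is a
   join: generators from different halves commute, which by
   [nonadjacent_noncommuting] forces adjacency. *)
Lemma natural_map_iso_join (X1 X2 : {set V}) :
  (forall v, ord v != 1%N) -> X1 :&: X2 = set0 ->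
  natural_map_iso adj ord X1 X2 ->
  forall x y, x \in X1 -> y \in X2 -> adj x y.
Proof.
move=> nontriv disj [hom _ _] x y xX1 yX2.
apply/negPn/negP => xy_nadj.
have xy : x != y.
  by apply: contraTneq yX2 => <-; apply/negP => xX2; move/setP/(_ x): disj;
     rewrite !inE xX1 xX2.
apply: (nonadjacent_noncommuting graph (nontriv x) (nontriv y) xy xy_nadj).
by apply: (hom [::] [:: (x, 1%R)] [:: (y, 1%R)] [::]); rewrite /word_in /= ?xX1 ?yX2.
Qed.

(* In a join of X and Y in which no star is the whole vertex set, X is a lower
   cone: s <=_tau t with s in Y and t in X would give lk(s) within st(t), while
   lk(s) contains X, so st(t) would be everything. *)
Lemma join_lower_cone (X Y : {set V}) :
  (forall v : V, st adj v != [set: V]) ->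
  X :|: Y = [set: V] -> (forall x y, x \in X -> y \in Y -> adj x y) ->
  lower_cone adj ord X.
Proof.
case: graph => sym _ nstar cover join t s tX [-> //|[_ s_le_t]].
apply/negPn/negP => sX.
have sY : s \in Y by have := in_setT s; rewrite -cover inE (negbTE sX).
have lk_s : lk adj s \subset st adj t.
  case: s_le_t => [[_ //]|[_]]; apply: subset_trans; exact: subsetUr.
apply/(negP (nstar t))/eqP/setP => z; rewrite in_setT.
have /setUP[zX|zY] : z \in X :|: Y by rewrite cover inE.
- have [->|_] := eqVneq z t; first by rewrite !inE eqxx.
  by apply: (subsetP lk_s); rewrite inE sym join.
- by rewrite !inE join ?orbT.
Qed.

End Joins.

Lemma primary_or_Z_nontrivial (V : finType) (ord : V -> nat) :
  primary_or_Z ord -> forall v, ord v != 1%N.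
Proof.
move=> P v; case: (P v) => [->|[p [k [p_prime [k_gt0 ->]]]]] //.
by rewrite -(expn0 p) eqn_exp2l ?prime_gt1 // -lt0n.
Qed.

Theorem lemma6p6 (V : finType) (adj : rel V) (ord : V -> nat)
  (V1 V2 : {set V}) :
  simple_graph adj ->
  primary_or_Z ord ->
  (forall v : V, st adj v != [set: V]) ->
  V1 :&: V2 = set0 -> V1 :|: V2 = [set: V] ->
  V1 != set0 -> V2 != set0 ->
  natural_map_iso adj ord V1 V2 ->
  lower_cone adj ord V1 /\ lower_cone adj ord V2.
Proof.
move=> graph /primary_or_Z_nontrivial nontriv nstar disj cover _ _ iso.
have join12 := natural_map_iso_join graph nontriv disj iso.
have join21 x y : x \in V2 -> y \in V1 -> adj x y.
  by move=> xV2 yV1; case: graph => sym _; rewrite sym join12.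
have cover21 : V2 :|: V1 = [set: V] by rewrite setUC.
split; first exact: (join_lower_cone graph nstar cover join12).
exact: (join_lower_cone graph nstar cover21 join21).
Qed.
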